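(* Let $n$ be a positive integer and let $G$ be a pure $(2n)$-sparse gapset of genus $g=3n+1$ with depth $q$. Then $q\le 4$.
   Context: A gapset is a finite set $G\subset\mathbb{N}=\{1,2,\dots\}$ such that whenever $z\in G$ and $z=x+y$ with $x,y\in\mathbb{N}$, then $x\in G$ or $y\in G$; its genus is $g=\#G$. Writing $G=\{\ell_1<\dots<\ell_g\}$: multiplicity $m(G)=\min\{s\in\mathbb{N}:s\notin G\}$; conductor $c(G)=\min\{s\in\mathbb{N}: s+t\notin G\ \forall t\in\mathbb{N}_0\}$; depth $q(G)=\lceil c(G)/m(G)\rceil$. $G$ is pure $\kappa$-sparse if $\ell_{i+1}-\ell_i\le\kappa$ for all $i$ with equality for some $i$. *)

From mathcomp Require Import all_boot.
Set Implicit Arguments. Unset Strict Implicit. Unset Printing Implicit Defensive.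

(* A finite set G ⊂ {1,2,...} is represented by the strictly increasing list
   of its elements  l_1 < ... < l_g. *)
Definition is_gapset (G : seq nat) : Prop :=
  [/\ sorted ltn G, all (fun x => 0 < x) G &
      forall z x y, z \in G -> 0 < x -> 0 < y -> z = x + y ->
        (x \in G) \/ (y \in G)].

Definition genus (G : seq nat) : nat := size G.

Definition is_multiplicity (G : seq nat) (m : nat) : Prop :=
  [/\ 0 < m, m \notin G & forall s, 0 < s -> s < m -> s \in G].

Definition conductor_prop (G : seq nat) (s : nat) : Prop :=
  forall t, s + t \notin G.
Definition is_conductor (G : seq nat) (c : nat) : Prop :=
  [/\ 0 < c, conductor_prop G c &
      forall s, 0 < s -> s < c -> ~ conductor_prop G s].

Definition ceil_div (c m : nat) : nat := (c + m.-1) %/ m.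

Definition pure_sparse (kappa : nat) (G : seq nat) : Prop :=
  (forall i, i.+1 < size G -> nth 0 G i.+1 - nth 0 G i <= kappa) /\
  (exists i, i.+1 < size G /\ nth 0 G i.+1 - nth 0 G i = kappa).

From mathcomp Require Import all_boot.
From mathcomp Require Import zify.

(* Every gap z satisfies z < 2g, because of
   each pair {s, z - s} at least one member is a gap; applied to the gap c - 1
   this gives c <= 2g.  Consecutive gaps differ by at most m, since for gaps
   a < b with m < b - a the gap b - m would lie strictly between them; so a pure
   2n-sparse gapset has m >= 2n.  Hence c <= 6n + 2 <= 8n <= 4m. *)

Section Gapset.

Variable G : seq nat.
Hypothesis gapG : is_gapset G.

Lemma gapset_split z x : z \in G -> 0 < x < z -> (x \in G) \/ (z - x \in G).
Proof.
case: gapG => _ _ split_sum zG x_bounds.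
by apply: (split_sum z) => //; lia.
Qed.

Lemma gap_lt_double_genus z : z \in G -> z < 2 * size G.
Proof.
move=> zG.
pose k := z %/ 2.
pose partner s := if s \in G then s else z - s.
have partner_gap s : 0 < s <= k -> partner s \in G.
  rewrite /partner => s_bounds; case: ifP => // s_notin.
  have [sG | //] := @gapset_split z s zG ltac:(lia).
  by rewrite sG in s_notin.
have partner_lt s : 0 < s <= k -> partner s < z.
  by rewrite /partner; case: ifP; lia.
have partner_inj : {in iota 1 k &, injective partner}.
  by move=> s s'; rewrite !mem_iota /partner; do 2 case: ifP => _; lia.
pose L := z :: map partner (iota 1 k).
have uniqL : uniq L.
  rewrite /= (map_inj_in_uniq partner_inj) iota_uniq andbT.
  apply/mapP => -[s]; rewrite mem_iota => s_bounds.
  by have := partner_lt s ltac:(lia); lia.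
have subL : {subset L <= G}.
  move=> x; rewrite inE => /predU1P [-> // | /mapP [s]].
  by rewrite mem_iota => s_bounds ->; apply: partner_gap; lia.
by have := uniq_leq_size uniqL subL; rewrite /= size_map size_iota; lia.
Qed.

Lemma conductor_le_double_genus c :
  0 < size G -> is_conductor G c -> c <= 2 * size G.
Proof.
move=> G_nonempty [c_gt0 c_cond c_min].
have [c_gt1 | ] := ltnP 1 c; last by lia.
suff : c.-1 \in G by move/gap_lt_double_genus; lia.
apply/negPn/negP => c_notin; apply: (c_min c.-1); try lia.
case=> [|t]; first by rewrite addn0.
by have -> : c.-1 + t.+1 = c + t by lia.
Qed.

Lemma gap_step_le_multiplicity m i :
  is_multiplicity G m -> i.+1 < size G -> nth 0 G i.+1 - nth 0 G i <= m.
Proof.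
case: gapG => sortG posG _ [m_gt0 m_notin _] i_lt.
have nth_lt j k : j < k -> k < size G -> nth 0 G j < nth 0 G k.
  move=> jk k_lt; apply: (sorted_ltn_nth ltn_trans 0 sortG); rewrite ?inE //.
  exact: ltn_trans k_lt.
set a := nth 0 G i; set b := nth 0 G i.+1.
rewrite leqNgt; apply/negP => m_lt.
have ab : a < b := nth_lt i i.+1 (ltnSn i) i_lt.
have bG : b \in G by apply: mem_nth.
have [mG | bmG] := @gapset_split b m bG ltac:(lia); first by rewrite mG in m_notin.
have := nth_index 0 bmG; have := index_mem (b - m) G; rewrite bmG.
set j := index _ G => j_lt nth_j.
case: (ltngtP j i) => [ji | ij | j_eq].
- by have := nth_lt j i ji (ltnW i_lt); rewrite nth_j -/a; lia.
- have [j_eq | j_gt] : j = i.+1 \/ i.+1 < j by lia.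
    by move: nth_j; rewrite j_eq -/b; lia.
  by have := nth_lt i.+1 j j_gt j_lt; rewrite nth_j -/b; lia.
- by move: nth_j; rewrite j_eq -/a; lia.
Qed.

Lemma pure_sparse_le_multiplicity kappa m :
  pure_sparse kappa G -> is_multiplicity G m -> kappa <= m.
Proof.
by move=> [_ [i [i_lt <-]]] mG; apply: gap_step_le_multiplicity.
Qed.

End Gapset.

Lemma ceil_div_le c m k : 0 < m -> c <= k * m -> ceil_div c m <= k.
Proof. by move=> m_gt0 c_le; rewrite /ceil_div -ltnS ltn_divLR //; lia. Qed.

Theorem mainTheorem15 (n : nat) (G : seq nat) (m c : nat) :
  0 < n ->
  is_gapset G ->
  pure_sparse (2 * n) G ->
  genus G = 3 * n + 1 ->
  is_multiplicity G m ->
  is_conductor G c ->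
  ceil_div c m <= 4.
Proof.
rewrite /genus => n_gt0 gapG sparseG genusG multG condG.
have m_ge : 2 * n <= m := @pure_sparse_le_multiplicity G gapG _ _ sparseG multG.
have c_le : c <= 2 * size G.
  by apply: (@conductor_le_double_genus G gapG c) condG; rewrite genusG addn1.
by apply: ceil_div_le; lia.
Qed.
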